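(* Let $G$ be a torsionless abelian group and $H\subseteq G$ a subgroup. Then $G$ binds $H$ if and only if every homomorphism $G\to\mathbb{Z}^{(\omega)}$ maps $H$ onto a group of finite rank. Moreover, $G$ binds itself if and only if $G$ does not admit a homomorphism onto $\mathbb{Z}^{(\omega)}$, if and only if $G$ does not have a direct summand isomorphic to $\mathbb{Z}^{(\omega)}$.
   Context: All groups are abelian. $\mathbb{Z}^{(\omega)}=\bigoplus_{n\in\omega}\mathbb{Z}$ is the direct sum of countably many copies of $\mathbb{Z}$ (the free abelian group of countably infinite rank). A group is torsionless if it embeds in $\mathbb{Z}^I$ for some set $I$ (equivalently, homomorphisms to $\mathbb{Z}$ separate its points). Rank means torsion-free rank (the dimension of $G\otimes\mathbb{Q}$ over $\mathbb{Q}$). A group $G$ binds a subgroup $H$ if every homomorphism from $G$ to a free abelian group maps $H$ into a group of finite rank. *)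

(* abelian groups are zmodTypes, homomorphisms are additive maps. *)
From HB Require Import structures.
From mathcomp Require Import all_boot all_order all_algebra.
Set Implicit Arguments. Unset Strict Implicit. Unset Printing Implicit Defensive.
Import Order.TTheory GRing.Theory Num.Theory.
Local Open Scope ring_scope.

Definition is_subgroup (G : zmodType) (H : G -> Prop) : Prop :=
  H 0 /\ (forall x y, H x -> H y -> H (x - y)).

Definition image_of (U V : Type) (f : U -> V) (H : U -> Prop) : V -> Prop :=
  fun y => exists2 x, H x & f x = y.

Definition Zindep (V : zmodType) (s : seq V) : Prop :=
  forall c : seq int, size c = size s ->
    \sum_(i < size s) (s`_i *~ c`_i) = 0 -> forall i, c`_i = 0.

(* Torsion-free rank (dim of S (x) Q) is finite: Z-independent families
   contained in S have bounded size. *)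
Definition finite_rank (V : zmodType) (S : V -> Prop) : Prop :=
  exists n : nat, forall s : seq V, (forall x, x \in s -> S x) ->
    Zindep s -> (size s <= n)%N.

Definition free_abelian (F : zmodType) : Prop :=
  exists (I : eqType) (b : I -> F),
    (forall x : F, exists (s : seq I) (c : seq int),
        x = \sum_(i < size s) ((map b s)`_i *~ c`_i))
  /\ (forall s : seq I, uniq s -> Zindep (map b s)).

Definition binds (G : zmodType) (H : G -> Prop) : Prop :=
  forall (F : zmodType), free_abelian F ->
    forall f : {additive G -> F}, finite_rank (image_of f H).

(* Z^(omega) = direct sum of countably many copies of Z, realised as the
   additive group of integer polynomials (finitely supported sequences in Z). *)
Definition Zomega : zmodType := {poly int}.

Definition torsionless (G : zmodType) : Prop :=
  forall x : G, x != 0 -> exists f : {additive G -> int}, f x != 0.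

Definition has_Zomega_summand (G : zmodType) : Prop :=
  exists (A B : G -> Prop), [/\ is_subgroup A, is_subgroup B,
    (forall x, A x -> B x -> x = 0),
    (forall x, exists a b, [/\ A a, B b & x = a + b]) &
    (exists f : {additive Zomega -> G}, injective f /\
      (forall y, A y <-> exists z, f z = y))].

From HB Require Import structures.
From mathcomp Require Import all_boot all_order all_algebra.
From Stdlib Require Import ClassicalEpsilon Classical.
Set Implicit Arguments. Unset Strict Implicit. Unset Printing Implicit Defensive.
Import Order.TTheory GRing.Theory Num.Theory.
Local Open Scope ring_scope.

(* If f maps G to a free group F and f(H) has infinite rank, choose independent
   families of every finite size in f(H).  Only countably many basis vectors of F
   occur in them, and projecting F onto these coordinates gives a map
   F -> Z^(omega) under which every family stays independent: so binding can be
   tested on maps to Z^(omega).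
   If f : G -> Z^(omega) has image of infinite rank, then for each degree n the
   coefficients of X^n in elements of f(G) of degree <= n form an ideal d_n Z;
   lifts of the generators form a triangular basis of f(G), with infinitely many
   d_n nonzero, and the coordinates along it map G onto Z^(omega).
   A map onto the free group Z^(omega) splits, which gives the direct summand;
   conversely, the projection onto such a summand maps G onto Z^(omega). *)

(** * Linear combinations and coordinates *)

Section LinearCombinations.
Variables (V : zmodType) (I : eqType) (b : I -> V).

Definition lincomb (r : seq (I * int)) : V := \sum_(p <- r) b p.1 *~ p.2.
Definition lincoef (r : seq (I * int)) (i : I) : int := \sum_(p <- r | p.1 == i) p.2.
Definition lin_indep : Prop := forall r, lincomb r = 0 -> forall i, lincoef r i = 0.

Definition oppcomb (r : seq (I * int)) := [seq (p.1, - p.2) | p <- r].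

Lemma lincombB r1 r2 : lincomb (r1 ++ oppcomb r2) = lincomb r1 - lincomb r2.
Proof.
rewrite /lincomb big_cat big_map -sumrN /=.
by congr (_ + _); apply: eq_bigr => p _; rewrite mulrNz.
Qed.

Lemma lincoefB r1 r2 i : lincoef (r1 ++ oppcomb r2) i = lincoef r1 i - lincoef r2 i.
Proof. by rewrite /lincoef big_cat big_map -sumrN. Qed.

Lemma lincoef_notin r i : i \notin map fst r -> lincoef r i = 0.
Proof.
move=> ir; rewrite /lincoef big1_seq // => p /andP[/eqP pi pr].
by case/negP: ir; rewrite -pi map_f.
Qed.

Lemma lincomb_regroup r : lincomb r = \sum_(i <- undup (map fst r)) b i *~ lincoef r i.
Proof.
under [RHS]eq_bigr => i _ do rewrite mulrz_sumr big_mkcond.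
rewrite exchange_big /lincomb; apply: eq_big_seq => p pr /=.
rewrite -big_mkcond -big_filter.
under eq_filter => i do rewrite eq_sym.
by rewrite filter_pred1_uniq ?undup_uniq ?mem_undup ?map_f // big_seq1.
Qed.

Lemma lincomb_split i r :
  lincomb r = lincomb [seq p <- r | p.1 != i] + b i *~ lincoef r i.
Proof.
rewrite /lincomb /lincoef (bigID (fun p => p.1 == i)) /= addrC big_filter mulrz_sumr.
by congr (_ + _); apply: eq_bigr => p /eqP ->.
Qed.

Lemma lincoef_filter i j r : j != i ->
  lincoef [seq p <- r | p.1 != i] j = lincoef r j.
Proof.
move=> ji; rewrite /lincoef big_filter_cond; apply: eq_bigl => p.
by case: (eqVneq p.1 j) => [->|]; rewrite ?ji ?andbF.
Qed.

Lemma lincoef_unique : lin_indep ->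
  forall r1 r2 i, lincomb r1 = lincomb r2 -> lincoef r1 i = lincoef r2 i.
Proof.
move=> indep r1 r2 i e; apply/eqP; rewrite -subr_eq0 -lincoefB; apply/eqP.
by apply: indep; rewrite lincombB e subrr.
Qed.

End LinearCombinations.

Section Coordinates.
Variables (G V : zmodType) (I : eqType) (b : I -> V) (f : {additive G -> V}).
Variable rep : G -> seq (I * int).
Hypotheses (b_indep : lin_indep b) (repP : forall x, f x = lincomb b (rep x)).

Definition coord (i : I) (x : G) : int := lincoef (rep x) i.

Lemma coord_lincomb x r i : f x = lincomb b r -> coord i x = lincoef r i.
Proof. by move=> fx; apply: (lincoef_unique b_indep); rewrite -repP. Qed.

Lemma coord_is_zmod_morphism i : zmod_morphism (coord i).
Proof.
move=> x y; rewrite -lincoefB; apply: coord_lincomb.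
by rewrite lincombB -!repP raddfB.
Qed.
HB.instance Definition _ i :=
  GRing.isZmodMorphism.Build G int (coord i) (coord_is_zmod_morphism i).

Lemma coord_supp i x : coord i x != 0 -> i \in map fst (rep x).
Proof. by rewrite /coord; apply: contraR => /lincoef_notin ->. Qed.

Lemma coord_eq0 x : (forall i, coord i x = 0) -> f x = 0.
Proof.
by move=> x0; rewrite repP lincomb_regroup big1 // => i _; rewrite -/(coord i x) x0.
Qed.

Variables (decode : nat -> option I) (rank : I -> nat).
Hypothesis decode_rank : forall k i, decode k = Some i -> (k <= rank i)%N.

Definition proj_coef (k : nat) (x : G) : int := oapp (coord^~ x) 0 (decode k).

(* An index [i] is only decoded at positions [k <= rank i]; this makes [proj x] a
   polynomial. *)
Definition proj (x : G) : Zomega :=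
  \poly_(k < \max_(i <- map fst (rep x)) (rank i).+1) proj_coef k x.

Lemma coef_proj x k : (proj x : {poly int})`_k = proj_coef k x.
Proof.
rewrite coef_poly; case: ltnP => // ge_k; rewrite /proj_coef.
case dk: (decode k) => [i|] //=; case: (eqVneq (coord i x) 0) => // /coord_supp ix.
have := @leq_bigmax_seq _ _ predT (fun i => (rank i).+1) _ ix isT.
by move/(leq_ltn_trans (decode_rank dk)); rewrite ltnNge ge_k.
Qed.

Lemma proj_is_zmod_morphism : zmod_morphism proj.
Proof.
move=> x y; apply/polyP => k; rewrite coefB !coef_proj /proj_coef.
by case: (decode k) => [i|] /=; rewrite ?raddfB ?subr0.
Qed.
HB.instance Definition _ :=
  GRing.isZmodMorphism.Build G Zomega proj proj_is_zmod_morphism.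

Lemma Zomega_projection : exists P : {additive G -> Zomega},
  forall x k, (P x : {poly int})`_k = proj_coef k x.
Proof. by exists proj; exact: coef_proj. Qed.

Lemma coord_comb_supp i (ys : seq G) (c : seq int) :
  coord i (\sum_(j < size ys) ys`_j *~ c`_j) != 0 ->
  exists2 y, y \in ys & i \in map fst (rep y).
Proof.
move=> nz; apply: NNPP => none; move/eqP: nz; apply.
rewrite raddf_sum big1 // => j _.
have cj : coord i ys`_j = 0.
  apply/eqP; apply: contraT => /coord_supp ij.
  by case: none; exists ys`_j; rewrite ?mem_nth.
by rewrite raddfMz /= cj mul0rz.
Qed.

End Coordinates.

(** * Free abelian groups and Z^(omega) *)

Lemma sum_nth_map (V : zmodType) (U : Type) (g : U -> V) (h : U -> int) (u : seq U) :
  \sum_(j < size (map g u)) (map g u)`_j *~ (map h u)`_j = \sum_(x <- u) g x *~ h x.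
Proof.
elim: u => [|a u IH]; first by rewrite big_ord0 big_nil.
by rewrite /= big_ord_recl big_cons -IH.
Qed.

Lemma free_abelian_lin_basis (F : zmodType) : free_abelian F ->
  exists (I : eqType) (b : I -> F), lin_indep b /\ forall x, exists r, x = lincomb b r.
Proof.
case=> I [b [b_span b_indep]]; exists I, b; split.
  move=> r r0 i; set u := undup (map fst r).
  have [iu|] := boolP (i \in u); last by rewrite mem_undup => /lincoef_notin.
  have := b_indep u (undup_uniq _) (map (lincoef r) u).
  rewrite sum_nth_map -lincomb_regroup r0 !size_map => /(_ erefl erefl (index i u)).
  by rewrite (nth_map i) ?index_mem // nth_index.
move=> x; have [s [c ->]] := b_span x; elim: s c => [|a s IH] c.
  by exists [::]; rewrite big_ord0 /lincomb big_nil.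
have [r er] := IH (behead c); exists ((a, c`_0) :: r).
rewrite big_ord_recl /lincomb big_cons -/(lincomb b r) -er.
by congr (_ + _); apply: eq_bigr => i _; rewrite nth_behead.
Qed.

Lemma Zindep_map (V W : zmodType) (h : {additive V -> W}) (s : seq V) :
  Zindep s ->
  (forall c : seq int, h (\sum_(i < size s) s`_i *~ c`_i) = 0 ->
     \sum_(i < size s) s`_i *~ c`_i = 0) ->
  Zindep (map h s).
Proof.
move=> s_indep h_inj c; rewrite size_map => sc hc; apply: s_indep sc _; apply: h_inj.
by rewrite -hc raddf_sum; apply: eq_bigr => i _; rewrite (nth_map 0) // raddfMz.
Qed.

Lemma finite_rank_sub (V : zmodType) (S S' : V -> Prop) :
  (forall x, S x -> S' x) -> finite_rank S' -> finite_rank S.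
Proof. by move=> sub [n hn]; exists n => s sS; apply: hn => x /sS /sub. Qed.

Lemma infinite_rank_large_family (V : zmodType) (S : V -> Prop) : ~ finite_rank S ->
  forall n, exists s : seq V, [/\ forall x, x \in s -> S x, Zindep s & (n < size s)%N].
Proof.
move=> nfr n; apply: NNPP => none; apply: nfr; exists n => s sS s_indep.
by rewrite leqNgt; apply/negP => lt; apply: none; exists s.
Qed.

Lemma poly_sumX (p : {poly int}) : p = \sum_(i < size p) 'X^i *~ p`_i.
Proof.
rewrite -{1}[p]coefK poly_def; apply: eq_bigr => i _.
by rewrite -scaler_int intz.
Qed.

Lemma Zindep_Xn (s : seq nat) : uniq s -> Zindep (map (fun i => 'X^i : Zomega) s).
Proof.
move=> s_uniq c; rewrite size_map => sc c0 i.
have [lt_is|ge_is] := ltnP i (size s); last by rewrite nth_default // sc.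
have := congr1 (fun q : {poly int} => q`_(nth 0%N s i)) c0.
rewrite coef0 coef_sum (bigD1 (Ordinal lt_is)) //= big1 ?addr0.
  by rewrite (nth_map 0%N) // coefMrz coefXn eqxx mulrzz mul1r.
move=> j ji; rewrite (nth_map 0%N) // coefMrz coefXn nth_uniq //.
by rewrite [i == j](negbTE _) ?mul0rz // eq_sym.
Qed.

Lemma Zomega_free : free_abelian Zomega.
Proof.
exists (nat : eqType), (fun i => 'X^i); split; last exact: Zindep_Xn.
move=> p; exists (iota 0 (size (p : {poly int}))), p.
rewrite size_iota {1}[p : {poly int}]poly_sumX; apply: eq_bigr => i _.
by rewrite (nth_map 0%N) ?size_iota // nth_iota.
Qed.

Lemma Zomega_infinite_rank : ~ finite_rank (fun _ : Zomega => True).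
Proof.
case=> n hn; have := hn _ (fun _ _ => Logic.I) (Zindep_Xn (iota_uniq 0 n.+1)).
by rewrite size_map size_iota ltnn.
Qed.

Lemma rat_vector_int_multiple (m : nat) (v : 'I_m -> rat) :
  exists (D : int) (c : 'I_m -> int), D != 0 /\ forall j, (c j)%:~R = v j * D%:~R.
Proof.
exists (\prod_(j < m) denq (v j)).
exists (fun j => numq (v j) * \prod_(j' < m | j' != j) denq (v j')); split.
  by apply/prodf_neq0 => j _; apply: denq_neq0.
by move=> j; rewrite [in RHS](bigD1 j) //= !intrM numqE mulrA.
Qed.

(* More than N polynomials of degree < N have a rational linear relation (their
   coefficient matrix has a nonzero kernel); clearing denominators makes it integral. *)
Lemma finite_rank_size_leq N : finite_rank (fun p : Zomega => (size p <= N)%N).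
Proof.
exists N => s s_size s_indep; rewrite leqNgt; apply/negP => lt_Ns.
set m := size s in lt_Ns s_indep *.
pose A : 'M[rat]_(m, N) := \matrix_(i, k) ((s`_i : {poly int})`_k)%:~R.
have [v vA v0] : exists2 v : 'rV[rat]_m, v *m A = 0 & v != 0.
  have : kermx A != 0.
    by rewrite kermx_eq0 /row_free neq_ltn (leq_ltn_trans (rank_leq_col A)) ?orbT.
  by case/rowV0Pn => v /sub_kermxP vA v0; exists v.
have /existsP [j0 vj0] : [exists j, v 0 j != 0].
  apply: contraR v0 => /existsPn v0j; apply/eqP/rowP => j; rewrite mxE.
  exact/eqP/negPn/v0j.
have [D [c [D0 cD]]] := rat_vector_int_multiple (v 0).
pose cs := mkseq (fun j => c (insubd j0 j)) m.
have : \sum_(i < m) s`_i *~ cs`_i = 0.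
  apply/polyP => k; rewrite coef_sum coef0.
  have [lt_kN|ge_kN] := ltnP k N; last first.
    rewrite big1 // => i _; rewrite coefMrz nth_default ?mul0rz //.
    exact: leq_trans (s_size _ (mem_nth 0 (ltn_ord i))) ge_kN.
  apply: (@intr_inj rat); rewrite rmorph0 rmorph_sum /=.
  have := congr1 (fun M : 'rV_N => M 0 (Ordinal lt_kN)) vA; rewrite !mxE => vAk.
  rewrite (eq_bigr (fun i => v 0 i * A i (Ordinal lt_kN) * D%:~R)).
    by rewrite -mulr_suml vAk mul0r.
  move=> i _; rewrite coefMrz /cs nth_mkseq // valKd mulrzz intrM cD mxE /=.
  by rewrite mulrCA mulrA.
move/(s_indep cs (size_mkseq _ _))/(_ j0)/(congr1 (fun z : int => z%:~R : rat)).
rewrite /cs nth_mkseq // valKd cD rmorph0 => /eqP.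
by rewrite mulf_eq0 (negbTE vj0) intr_eq0 (negbTE D0).
Qed.

(** * Maps from free groups to Z^(omega) *)

Lemma countable_union_enum (I : eqType) (T : nat -> seq I) :
  exists (decode : nat -> option I) (code : I -> nat),
    (forall k i, decode k = Some i -> code i = k) /\
    (forall n i, i \in T n -> decode (code i) = Some i).
Proof.
have [nI nIP] : exists nI : I -> nat, forall i n, i \in T n -> i \in T (nI i).
  apply: (choice (fun i m => forall n, i \in T n -> i \in T m)) => i.
  have [[n iTn]|none] := classic (exists n, i \in T n); first by exists n.
  by exists 0%N => n iTn; case: none; exists n.
pose code i := pickle (nI i, index i (T (nI i))).
have code_inj n m i j : i \in T n -> j \in T m -> code i = code j -> i = j.
  move=> /nIP iT /nIP jT /(pcan_inj pickleK) [eI eidx].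
  by rewrite -(nth_index i iT) -(nth_index i jT) eidx eI.
have [decode decodeP] : exists decode : nat -> option I, forall k,
    (forall i, decode k = Some i -> code i = k) /\
    (forall n i, i \in T n -> code i = k -> decode k = Some i).
  apply: (choice (fun k o => (forall i, o = Some i -> code i = k) /\
                             (forall n i, i \in T n -> code i = k -> o = Some i))) => k.
  have [[n [i [iTn <-]]]|none] := classic (exists n i, i \in T n /\ code i = k).
    exists (Some i); split=> [_ [<-] // | m j jTm cj].
    by rewrite (code_inj _ _ _ _ jTm iTn cj).
  by exists None; split=> // n i iTn ci; case: none; exists n, i.
exists decode, code; split=> [k i|n i iTn]; first exact: (decodeP k).1.
exact: (decodeP _).2 n i iTn erefl.
Qed.

Lemma free_projection_infinite_rank (F : zmodType) (S : F -> Prop) :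
  free_abelian F -> ~ finite_rank S ->
  exists P : {additive F -> Zomega}, ~ finite_rank (image_of P S).
Proof.
case/free_abelian_lin_basis => I [b [b_indep b_span]] nfr.
have [rep repP] := choice _ b_span.
have [fam famP] := choice _ (infinite_rank_large_family nfr).
pose T n := flatten [seq map fst (rep y) | y <- fam n].
have [decode [code [decode_code code_decode]]] := countable_union_enum T.
have decode_rank k i : decode k = Some i -> (k <= code i)%N by move/decode_code ->.
have [P Pcoef] := Zomega_projection (f := idfun) b_indep repP decode_rank.
exists P => -[N hN]; have [famS fam_indep lt_N] := famP N.
suff P_indep : Zindep (map P (fam N)).
  have : (size (map P (fam N)) <= N)%N.
    by apply: hN P_indep => _ /mapP[y /famS Sy ->]; exists y.
  by rewrite size_map leqNgt lt_N.
apply: Zindep_map fam_indep _ => c; set z := \sum_(j < _) _ => Pz.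
apply: (coord_eq0 (f := idfun) (x := z) repP) => i.
apply/eqP; apply: contraT => /[dup] nz.
case/(coord_comb_supp (f := idfun) b_indep repP) => y yfam iy.
have decoded : decode (code i) = Some i.
  by apply: (code_decode N); apply/flatten_mapP; exists y.
have := Pcoef z (code i); rewrite Pz coef0 /proj_coef decoded /= => coord0.
by rewrite -coord0 eqxx in nz.
Qed.

Lemma binds_of_Zomega (G : zmodType) (H : G -> Prop) :
  (forall f : {additive G -> Zomega}, finite_rank (image_of f H)) -> binds H.
Proof.
move=> fin F F_free f; apply: NNPP => /(free_projection_infinite_rank F_free) [P nfr].
apply: nfr; apply: finite_rank_sub (fin (P \o f)) => _ [_ [x Hx <-] <-].
by exists x.
Qed.

(** * Subgroups of Z^(omega) *)

Lemma int_ideal_principal (D : int -> Prop) :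
  D 0 -> (forall a b, D a -> D b -> D (a - b)) -> (forall a q, D a -> D (a * q)) ->
  exists d, D d /\ forall a, D a -> (d %| a)%Z.
Proof.
move=> D0 DB DM.
have [[a Da a0]|all0] := classic (exists2 a, D a & a != 0); last first.
  by exists 0; split=> // a Da; rewrite dvd0z; apply: contraT => a0; case: all0; exists a.
move: {2}`|a|%N (erefl `|a|%N) => n; elim/ltn_ind: n a Da a0 => n IH a Da a0 an.
have [[b Db a_ndvd_b]|a_dvd] := classic (exists2 b, D b & ~~ (a %| b)%Z); last first.
  by exists a; split=> // b Db; apply/negPn/negP => ndvd; apply: a_dvd; exists b.
have Dr : D (b %% a)%Z.
  have := DB _ _ Db (DM a (b %/ a)%Z Da).
  by rewrite {1}(divz_eq b a) [a * _]mulrC addrAC subrr add0r.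
apply: (IH `|(b %% a)%Z|%N _ _ Dr) => //; last first.
  by apply: contra a_ndvd_b => /eqP r0; apply/dvdz_mod0P.
by rewrite -an -ltz_nat !abszE ger0_norm ?modz_ge0 // ltz_mod.
Qed.

Lemma increasing_enum (P : nat -> Prop) :
  (forall N, exists k, (N <= k)%N /\ P k) ->
  exists nu : nat -> nat, (forall j, P (nu j)) /\ (forall j, (nu j < nu j.+1)%N).
Proof.
move=> unbounded; have [next nextP] := choice _ unbounded.
exists (fix nu j := if j is j'.+1 then next (nu j').+1 else next 0%N).
by split=> [[|j]|j] /=; [exact: (nextP _).2 | exact: (nextP _).2 | exact: (nextP _).1].
Qed.

Lemma size_polyMz (p : {poly int}) q : (size (p *~ q) <= size p)%N.
Proof. by apply/leq_sizeP => j le_pj; rewrite coefMrz nth_default ?mul0rz. Qed.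

Lemma size_poly_leq_coef (p : {poly int}) n :
  (size p <= n.+1)%N -> p`_n = 0 -> (size p <= n)%N.
Proof.
move=> le_pn pn0; apply/leq_sizeP => j; rewrite leq_eqVlt => /orP[/eqP <- //|lt_nj].
exact: (leq_sizeP _ _ le_pn).
Qed.

Section SubgroupsOfZomega.
Variables (G : zmodType) (f : {additive G -> Zomega}).

Definition top_coef (n : nat) (a : int) : Prop :=
  exists x, (size (f x : {poly int}) <= n.+1)%N /\ (f x : {poly int})`_n = a.

Lemma top_coef_ideal n : exists d, top_coef n d /\ forall a, top_coef n a -> (d %| a)%Z.
Proof.
apply: int_ideal_principal.
- by exists 0; rewrite raddf0 size_poly0 coef0.
- move=> _ _ [x [sx <-]] [y [sy <-]]; exists (x - y); rewrite raddfB coefB.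
  by split=> //; rewrite (leq_trans (size_polyD _ _)) // size_polyN geq_max sx sy.
- move=> _ q [x [sx <-]]; exists (x *~ q); rewrite raddfMz coefMrz mulrzz.
  by split=> //; apply: leq_trans (size_polyMz _ _) sx.
Qed.

Variables (d : nat -> int) (gen : nat -> G).
Hypotheses (d_dvd : forall n a, top_coef n a -> (d n %| a)%Z)
  (gen_size : forall n, (size (f (gen n) : {poly int}) <= n.+1)%N)
  (gen_coef : forall n, (f (gen n) : {poly int})`_n = d n).

Local Notation degree := {n : nat | d n != 0}.

Definition tri_basis (i : degree) : Zomega := f (gen (val i)).

Lemma tri_basis_span x : exists r, f x = lincomb tri_basis r.
Proof.
move: (leqnn (size (f x : {poly int}))); move: {2}(size _) => N.
elim: N x => [|N IH] x le_xN.
  by exists [::]; rewrite /lincomb big_nil; apply/eqP; rewrite -size_poly_leq0.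
have /dvdzP [q xN] : (d N %| (f x : {poly int})`_N)%Z by apply: d_dvd; exists x.
have [dN0|dN] := eqVneq (d N) 0.
  by apply: IH; apply: size_poly_leq_coef le_xN _; rewrite xN dN0 mulr0.
have [|r xr] := IH (x - gen N *~ q).
  rewrite raddfB raddfMz; apply: size_poly_leq_coef; last first.
    by rewrite coefB coefMrz gen_coef xN mulrzz mulrC subrr.
  rewrite (leq_trans (size_polyD _ _)) // size_polyN geq_max le_xN.
  exact: leq_trans (size_polyMz _ _) (gen_size N).
exists ((exist _ N dN, q) :: r); rewrite /lincomb big_cons -/(lincomb _ r) -xr.
by rewrite raddfB raddfMz /tri_basis /= addrC subrK.
Qed.

Lemma coef_lincomb_top N r (dN : d N != 0) :
  (forall p, p \in r -> (val p.1 <= N)%N) ->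
  (lincomb tri_basis r : {poly int})`_N = d N * lincoef r (exist _ N dN).
Proof.
move=> le_rN; rewrite /lincomb /lincoef coef_sum mulr_sumr [RHS]big_mkcond.
apply: eq_big_seq => p pr /=; rewrite coefMrz.
case: eqP => [->|neq]; first by rewrite /tri_basis gen_coef mulrzz.
rewrite nth_default ?mul0rz // (leq_trans (gen_size _)) // ltn_neqAle le_rN //.
by rewrite andbT; apply/eqP => eN; apply: neq; apply: val_inj.
Qed.

(* Induction on a bound N for the degrees in [r]: the coefficient of X^N only sees
   the basis vector of degree N, whose coefficient in [r] must therefore vanish. *)
Lemma tri_basis_indep : lin_indep tri_basis.
Proof.
move=> r; have : forall p, p \in r -> (val p.1 < (\max_(p <- r) val p.1).+1)%N.
  by move=> p pr; rewrite ltnS (@leq_bigmax_seq _ _ predT (fun p => val p.1)).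
move: (_.+1) => N; elim: N r => [|N IH] r lt_rN r0 i.
  by case: r lt_rN r0 => [_ _|p r /(_ p (mem_head _ _))]; rewrite /lincoef ?big_nil.
have val_eqN p : p \in r -> val p.1 != N -> (val p.1 < N)%N.
  by move=> pr pN; rewrite ltn_neqAle pN -ltnS lt_rN.
have [dN0|dN] := eqVneq (d N) 0.
  apply: IH r0 i => p pr; apply: val_eqN => //.
  by apply: contraTneq (valP p.1) => ->; rewrite dN0 eqxx.
pose iN : degree := exist _ N dN.
have ciN : lincoef r iN = 0.
  have /eqP := coef_lincomb_top dN (fun p pr => lt_rN p pr).
  by rewrite r0 coef0 eq_sym mulf_eq0 (negbTE dN) => /eqP.
have [-> //|neq] := eqVneq i iN.
rewrite -(lincoef_filter _ neq); apply: IH.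
  by move=> p; rewrite mem_filter => /andP[pN pr]; apply: val_eqN.
by move: r0; rewrite (lincomb_split _ iN) ciN mulr0z addr0.
Qed.

Lemma unbounded_degrees : ~ finite_rank (image_of f (fun _ => True)) ->
  forall N, exists k, (N <= k)%N /\ d k != 0.
Proof.
move=> nfr N; apply: NNPP => none; apply: nfr.
apply: finite_rank_sub (finite_rank_size_leq N) => _ [x _ <-].
rewrite leqNgt; apply/negP => lt_Nx; apply: none.
have [n xn] : exists n, size (f x : {poly int}) = n.+1.
  by exists (size (f x)).-1; rewrite prednK // (leq_ltn_trans _ lt_Nx).
exists n; split; first by rewrite -ltnS -xn.
have /d_dvd : top_coef n (lead_coef (f x)) by exists x; rewrite lead_coefE xn.
by apply: contraTneq => ->; rewrite dvd0z lead_coef_eq0 -size_poly_eq0 xn.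
Qed.

Lemma increasing_degrees_hit_Xn (nu : nat -> nat) :
  (forall j, d (nu j) != 0) -> (forall j, (nu j < nu j.+1)%N) ->
  exists g : {additive G -> Zomega}, forall j, g (gen (nu j)) = 'X^j.
Proof.
move=> nu_deg nu_inc; have nu_homo := homo_ltn ltn_trans nu_inc.
have nu_inj : injective nu := incn_inj (leq_mono nu_homo).
have [rep repP] := choice _ tri_basis_span.
pose decode k : option degree := insub (nu k).
have decode_rank k i : decode k = Some i -> (k <= val i)%N.
  rewrite /decode (insubT (fun n => d n != 0) (nu_deg k)) => -[<-] /=.
  by elim: k => // k IH; apply: leq_ltn_trans IH (nu_inc k).
have [g gcoef] := Zomega_projection tri_basis_indep repP decode_rank.
exists g => j; apply/polyP => k.
rewrite gcoef /proj_coef /decode (insubT (fun n => d n != 0) (nu_deg k)) /= coefXn.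
rewrite (coord_lincomb tri_basis_indep repP (r := [:: (exist _ (nu j) (nu_deg j), 1)])).
  by rewrite /lincoef big_mkcond big_seq1 -val_eqE /= (inj_eq nu_inj) eq_sym; case: eqP.
by rewrite /lincomb big_seq1.
Qed.

End SubgroupsOfZomega.

Lemma infinite_rank_hits_Xn (G : zmodType) (f : {additive G -> Zomega}) :
  ~ finite_rank (image_of f (fun _ => True)) ->
  exists g : {additive G -> Zomega}, forall n, exists x, g x = 'X^n.
Proof.
move=> nfr; have [d dP] := choice _ (top_coef_ideal f).
have [gen genP] := choice _ (fun n => (dP n).1).
have d_dvd n := (dP n).2.
have [nu [nu_deg nu_inc]] := increasing_enum (unbounded_degrees d_dvd nfr).
have [g gX] := increasing_degrees_hit_Xn d_dvd (fun n => (genP n).1)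
  (fun n => (genP n).2) nu_deg nu_inc.
by exists g => n; exists (gen (nu n)).
Qed.

(** * Direct summands isomorphic to Z^(omega) *)

Section LiftingPolynomials.
Variables (G : zmodType) (g : {additive G -> Zomega}) (lift : nat -> G).
Hypothesis liftP : forall n, g (lift n) = 'X^n.

Definition lift_poly_upto (N : nat) (p : {poly int}) : G := \sum_(i < N) lift i *~ p`_i.
Definition lift_poly (p : Zomega) : G := lift_poly_upto (size p) p.

Lemma lift_poly_uptoE N (p : {poly int}) :
  (size p <= N)%N -> lift_poly_upto N p = lift_poly p.
Proof.
move=> le_pN; rewrite /lift_poly /lift_poly_upto.
rewrite (big_ord_widen N (fun i => lift i *~ p`_i) le_pN).
rewrite [RHS]big_mkcond; apply: eq_bigr => i _.
by case: ltnP => // ge_pi; rewrite nth_default ?mulr0z.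
Qed.

Lemma lift_poly_is_zmod_morphism : zmod_morphism lift_poly.
Proof.
move=> p q; set N := maxn (size (p : {poly int})) (size (q : {poly int})).
rewrite -(@lift_poly_uptoE N (p - q)); last first.
  by rewrite (leq_trans (size_polyD _ _)) // size_polyN.
rewrite -(@lift_poly_uptoE N p) ?leq_maxl // -(@lift_poly_uptoE N q) ?leq_maxr //.
by rewrite /lift_poly_upto -sumrB; apply: eq_bigr => i _; rewrite coefB mulrzBr.
Qed.
HB.instance Definition _ :=
  GRing.isZmodMorphism.Build Zomega G lift_poly lift_poly_is_zmod_morphism.

Lemma lift_polyK : cancel lift_poly g.
Proof.
move=> p; rewrite /lift_poly /lift_poly_upto raddf_sum [RHS]poly_sumX.
by apply: eq_bigr => i _; rewrite raddfMz liftP.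
Qed.

End LiftingPolynomials.

Lemma section_of_hits_Xn (G : zmodType) (g : {additive G -> Zomega}) :
  (forall n, exists x, g x = 'X^n) -> exists s : {additive Zomega -> G}, cancel s g.
Proof. by case/choice => lift liftP; exists (lift_poly lift); exact: lift_polyK. Qed.

Lemma summand_of_section (G : zmodType) (g : {additive G -> Zomega})
    (s : {additive Zomega -> G}) :
  cancel s g -> has_Zomega_summand G.
Proof.
move=> sK; exists (fun y => exists z, s z = y), (fun y => g y = 0); split.
- split; first by exists 0; rewrite raddf0.
  by move=> _ _ [z <-] [z' <-]; exists (z - z'); rewrite raddfB.
- by split=> [|x y gx gy]; rewrite ?raddf0 // raddfB gx gy subr0.
- by move=> _ [z <-]; rewrite sK => ->; rewrite raddf0.
- move=> x; exists (s (g x)), (x - s (g x)).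
  by split; [exists (g x) | rewrite raddfB sK subrr | rewrite addrC subrK].
- by exists s; split=> [|y]; [exact: can_inj sK | split].
Qed.

Lemma onto_of_summand (G : zmodType) : has_Zomega_summand G ->
  exists g : {additive G -> Zomega}, forall y, exists x, g x = y.
Proof.
case=> A [B [_ [B0 BB] AB0 AB [s [s_inj sA]]]].
have [pr prB] : exists pr : G -> Zomega, forall x, B (x - s (pr x)).
  apply: (choice (fun x z => B (x - s z))) => x.
  have [a [b [Aa Bb ->]]] := AB x; have [z <-] := (sA a).1 Aa.
  by exists z; rewrite addrC addKr.
have pr_uniq x z : B (x - s z) -> pr x = z.
  move=> Bxz; have := BB _ _ Bxz (prB x); rewrite opprB addrC addrA subrK -raddfB.
  move=> B_sdiff; apply/eqP; rewrite -subr_eq0; apply/eqP/s_inj; rewrite raddf0.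
  by apply: AB0 B_sdiff; apply/sA; exists (pr x - z).
have pr_is_zmod_morphism : zmod_morphism pr.
  move=> x y; apply: pr_uniq; rewrite [s _]raddfB.
  suff -> : x - y - (s (pr x) - s (pr y)) = x - s (pr x) - (y - s (pr y)) by apply: BB.
  by rewrite !opprB addrACA [RHS]addrACA [- y + _]addrC.
pose g : {additive G -> Zomega} :=
  HB.pack pr (GRing.isZmodMorphism.Build G Zomega pr pr_is_zmod_morphism).
by exists g => z; exists (s z); apply: pr_uniq; rewrite subrr.
Qed.

Theorem proposition3 (G : zmodType) (H : G -> Prop) :
  torsionless G -> is_subgroup H ->
  (binds H <-> forall f : {additive G -> Zomega}, finite_rank (image_of f H))
  /\ (binds (fun _ : G => True) <->
        ~ (exists f : {additive G -> Zomega}, forall y : Zomega, exists x, f x = y))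
  /\ (binds (fun _ : G => True) <-> ~ has_Zomega_summand G).
Proof.
move=> _ _.
have binds_iff (K : G -> Prop) :
    binds K <-> forall f : {additive G -> Zomega}, finite_rank (image_of f K).
  by split=> [bK f|]; [exact: bK _ Zomega_free f | exact: binds_of_Zomega].
have binds_onto : binds (fun _ : G => True) <->
    ~ exists f : {additive G -> Zomega}, forall y, exists x, f x = y.
  split=> [bG [f f_onto]|not_onto].
    apply: Zomega_infinite_rank; apply: finite_rank_sub (bG _ Zomega_free f) => y _.
    by have [x <-] := f_onto y; exists x.
  apply/binds_iff => f; apply: NNPP.
  case/infinite_rank_hits_Xn => g /section_of_hits_Xn [s sK].
  by apply: not_onto; exists g => y; exists (s y).
split; first exact: binds_iff.
split; first exact: binds_onto.
rewrite binds_onto; split=> [not_onto /onto_of_summand //|no_summand [g g_onto]].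
apply: no_summand; have [s sK] := section_of_hits_Xn (fun n => g_onto 'X^n).
exact: summand_of_section sK.
Qed.
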